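(* Define, for $n'\in\mathbb{N}_+$ and $n\in\{0,\dots,n'\}$, $\gamma_{n,n'}=\Big(\sum_{j=0}^{n}\binom{n'}{j}\Big){\rm e}_{n'}$. Then the collection $(\gamma_{n,n'})_{n'\in\mathbb{N}_+,n\in\{0,\dots,n'\}}$ belongs to $\Gamma$ (i.e. satisfies the bound condition).
   Context: $\sigma(x)=\max(0,x)$; $\mathrm{RL}(n,n')$ ($n,n'\in\mathbb{N}_+$) is the set of maps $h:\mathbb{R}^n\to\mathbb{R}^{n'}$, $h(x)_i=\sigma(\langle x,w_i\rangle+b_i)$ for some $W\in\mathbb{R}^{n'\times n}$ with rows $w_i$, $b\in\mathbb{R}^{n'}$; convention: $\mathrm{RL}(0,n')$ are constant maps $\{0\}\to\mathbb{R}^{n'}$ with $\mathcal{H}_{n'}(\mathcal{S}_h)={\rm e}_0$. $S_h(x)_i=1$ iff $\langle x,w_i\rangle+b_i>0$ else $0$; $\mathcal{S}_h=\{S_h(x):x\in\mathbb{R}^n\}$; $|s|=\sum_is_i$. $V$: sequences $(v_j)_{j\in\mathbb{N}}$ of nonnegative integers with finite sum; ${\rm e}_i$ has $({\rm e}_i)_j=\delta_{ij}$; $v\preceq w$ iff $\sum_{j\ge J}v_j\le\sum_{j\ge J}w_j$ for all $J\in\mathbb{N}$; for finite families, $\max_i(v^{(i)})_J=\max_i\sum_{j\ge J}v^{(i)}_j-\max_i\sum_{j\ge J+1}v^{(i)}_j$. $\mathcal{H}_{n'}(\mathcal{S})=(|\{s\in\mathcal{S}:|s|=j\}|)_j$.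 $\Gamma$ (bound condition): families $(\gamma_{n,n'})_{n'\in\mathbb{N}_+,n\in\{0,\dots,n'\}}$ in $V$ with (i) $\max\{\mathcal{H}_{n'}(\mathcal{S}_h):h\in\mathrm{RL}(n,n')\}\preceq\gamma_{n,n'}$ for all $n'\in\mathbb{N}_+$, $n\in\{0,\dots,n'\}$, and (ii) $n\le\tilde n\le n'\Rightarrow\gamma_{n,n'}\preceq\gamma_{\tilde n,n'}$. *)

From HB Require Import structures.
From mathcomp Require Import all_boot all_order all_algebra.
From mathcomp Require Import boolp reals.
Set Implicit Arguments. Unset Strict Implicit. Unset Printing Implicit Defensive.
Import Order.TTheory GRing.Theory Num.Theory.

(* V : finitely supported sequences of naturals, represented as finite lists
   (v_j := nth 0 v j, zero beyond the list). *)
Definition V := seq nat.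
Definition coord (v : V) (j : nat) : nat := nth 0%N v j.
Definition tail (v : V) (J : nat) : nat := (\sum_(J <= j < size v) coord v j)%N.
Definition preceq (v w : V) : Prop := forall J, (tail v J <= tail w J)%N.
Definition scal_e (c i : nat) : V := rcons (nseq i 0%N) c.
Definition e_ (i : nat) : V := scal_e 1 i.

Definition is_max_nat (P : nat -> Prop) (t : nat) : Prop :=
  P t /\ forall u, P u -> (u <= t)%N.
Definition is_maxV (F : V -> Prop) (m : V) : Prop :=
  exists T : nat -> nat,
    (forall J, is_max_nat (fun t => exists v, F v /\ t = tail v J) (T J)) /\
    (forall J, coord m J = T J - T J.+1)%N.

Definition Hvec (n' : nat) (S : {set {ffun 'I_n' -> bool}}) : V :=
  mkseq (fun j => #|[set s in S | (\sum_(i < n') s i == j)%N]|) n'.+1.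

Section RL.
Variable R : realType.
Local Open Scope ring_scope.
(* h(x) = sigma(W x + b); activation pattern S_h(x) *)
Definition pattern n n' (W : 'M[R]_(n', n)) (b : 'cV[R]_n') (x : 'cV[R]_n)
  : {ffun 'I_n' -> bool} := [ffun i => 0 < (W *m x + b) i 0].
Definition Sh n n' (W : 'M[R]_(n', n)) (b : 'cV[R]_n') : {set {ffun 'I_n' -> bool}} :=
  [set s | `[< exists x, s = pattern W b x >]].
(* H_{n'}(S_h) for h in RL(n,n'); for n = 0 the convention H = e_0 *)
Definition H_RL n n' (W : 'M[R]_(n', n)) (b : 'cV[R]_n') : V :=
  if n == 0%N then e_ 0 else Hvec (Sh W b).
Definition RLfam (n n' : nat) : V -> Prop :=
  fun v => exists (W : 'M[R]_(n', n)) (b : 'cV[R]_n'), v = H_RL W b.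

Definition bound_condition (g : nat -> nat -> V) : Prop :=
  (forall n' n, (0 < n')%N -> (n <= n')%N ->
     exists m, is_maxV (RLfam n n') m /\ preceq m (g n n')) /\
  (forall n' n nt, (0 < n')%N -> (n <= nt)%N -> (nt <= n')%N ->
     preceq (g n n') (g nt n')).
End RL.

Definition gamma_binom (n n' : nat) : V :=
  scal_e (\sum_(j < n.+1) 'C(n', j))%N n'.

From Pilot Require Import Defs.
From HB Require Import structures.
From mathcomp Require Import all_boot all_order all_algebra.
From mathcomp Require Import boolp reals.
Set Implicit Arguments. Unset Strict Implicit. Unset Printing Implicit Defensive.
Import Order.TTheory GRing.Theory Num.Theory.

(* Identify an activation pattern with its set of active neurons.  By Pajor's
   form of the Sauer-Shelah lemma, a family of subsets of 'I_n' has at most as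
   many members as there are sets it shatters.  A set S of more than n neurons
   is never shattered by the activation sets of x |-> W x + b: the rows of W
   indexed by S are linearly dependent, so some nonzero v gives
   sum_(i in S) v_i (W x + b)_i = c for every x, and the two patterns "active
   exactly where v < 0" and "active exactly where v > 0" force c < 0 <= c or
   c <= 0 < c.  Hence every H_n'(S_h) has total mass at most
   sum_(j <= n) 'C(n', j) and support in [0, n'], i.e. it lies below
   gamma_(n, n').  All tails being bounded, the maximum of the family exists
   and its tails are the maxima of the tails, so it lies below gamma too. *)

Section Shattering.
Variable T : finType.
Implicit Types (F G : {set {set T}}) (S A B C : {set T}) (x : T).

Definition shatters F S : bool :=
  [forall B : {set T}, (B \subset S) ==> [exists A in F, A :&: S == B]].

Definition shattered_sets F : {set {set T}} := [set S | shatters F S].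

Lemma shattersP F S :
  reflect (forall B, B \subset S -> exists2 A, A \in F & A :&: S = B) (shatters F S).
Proof.
apply: (iffP forallP) => [shF B BS | shF B].
  by move: (shF B); rewrite BS => /existsP[A /andP[AF /eqP AS]]; exists A.
by apply/implyP => /shF[A AF AS]; apply/existsP; exists A; rewrite AF AS eqxx.
Qed.

Lemma shatters_subset F G S : F \subset G -> shatters F S -> shatters G S.
Proof.
move=> /subsetP FG /shattersP shF; apply/shattersP => B /shF[A AF AS].
by exists A; first exact: FG.
Qed.

Lemma shatters_set0 F : F != set0 -> shatters F set0.
Proof.
case/set0Pn=> A AF; apply/shattersP => B; rewrite subset0 => /eqP->.
by exists A; rewrite ?setI0.
Qed.

Lemma shatters_notin F S x :
  {in F &, forall A B, (x \in A) = (x \in B)} -> shatters F S -> x \notin S.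
Proof.
move=> xF /shattersP shF; apply/negP => xS.
have [|A AF /setP/(_ x)] := shF [set x]; first by rewrite sub1set.
have [B BF /setP/(_ x)] := shF set0 (sub0set S).
by rewrite !inE xS eqxx (xF A B AF BF) => ->.
Qed.

Section Split.
Variables (F : {set {set T}}) (x : T).
Let Fx := F :&: [set A : {set T} | x \in A].
Let Fnx := F :\: [set A : {set T} | x \in A].

Lemma shatters_setU1 S : shatters Fx S -> shatters Fnx S -> shatters F (x |: S).
Proof.
move=> /shattersP shFx /shattersP shFnx; apply/shattersP => C CxS.
have [xC | xNC] := boolP (x \in C).
  have [|A] := shFx (C :\ x).
    apply/subsetP => y; rewrite !inE => /andP[yx /(subsetP CxS)].
    by rewrite !inE (negbTE yx).
  rewrite !inE => /andP[AF xA] AS; exists A => //.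
  apply/setP => y; move/setP/(_ y): AS; rewrite !inE.
  by case: (eqVneq y x) => [->|_]; rewrite ?xA ?xC.
have [|A] := shFnx C.
  apply/subsetP => y yC; move/subsetP/(_ y yC): CxS.
  by rewrite !inE; case: eqP yC xNC => // ->->.
rewrite !inE => /andP[xNA AF] AS; exists A => //.
apply/setP => y; move/setP/(_ y): AS; rewrite !inE.
by case: (eqVneq y x) => [->|_]; rewrite ?(negbTE xNA) ?(negbTE xNC).
Qed.

Lemma card_shattered_split :
  #|shattered_sets Fx| + #|shattered_sets Fnx| <= #|shattered_sets F|.
Proof.
set S1 := shattered_sets Fx; set S0 := shattered_sets Fnx.
have xNS1 S : S \in S1 -> x \notin S.
  by rewrite inE; apply: shatters_notin => A B; rewrite !inE => /andP[_ ->] /andP[_ ->].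
have xNS0 S : S \in S0 -> x \notin S.
  rewrite inE; apply: shatters_notin => A B; rewrite !inE => /andP[xNA _] /andP[xNB _].
  by rewrite (negbTE xNA) (negbTE xNB).
pose I := (fun S => x |: S) @: (S1 :&: S0).
have cardI : #|I| = #|S1 :&: S0|.
  apply: card_in_imset => S S'; rewrite !in_setI => /andP[/xNS1 xS _] /andP[/xNS1 xS' _].
  by move=> eqS; rewrite -(setU1K xS) -(setU1K xS') eqS.
have sub_shF G : G \subset F -> shattered_sets G \subset shattered_sets F.
  by move=> GF; apply/subsetP => S; rewrite !inE; apply: shatters_subset.
have I_sub : I \subset shattered_sets F.
  apply/subsetP => _ /imsetP[S + ->]; rewrite !inE => /andP[sh1 sh0].
  exact: shatters_setU1.
have disjI : [disjoint I & S1 :|: S0].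
  rewrite disjoints_subset; apply/subsetP => _ /imsetP[S _ ->].
  rewrite in_setC in_setU.
  by apply/negP => /orP[/xNS1 | /xNS0]; rewrite setU11.
have cardIU : #|I :|: (S1 :|: S0)| = #|I| + #|S1 :|: S0|.
  by rewrite cardsU (disjoint_setI0 disjI) cards0 subn0.
rewrite -cardsUI -cardI addnC -cardIU.
apply: subset_leq_card; rewrite !subUset I_sub !sub_shF //.
  exact: subsetDl.
exact: subsetIl.
Qed.
End Split.

Lemma exists_separating_point A B :
  A != B -> exists x, (x \in A) && (x \notin B) || (x \in B) && (x \notin A).
Proof.
move=> neqAB; apply/existsP; apply: contraR neqAB => /existsPn noSep.
by apply/eqP/setP => x; move: (noSep x); case: (x \in A); case: (x \in B).
Qed.

Lemma card_le_shattered F : #|F| <= #|shattered_sets F|.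
Proof.
have [N] := ubnP #|F|; elim: N F => // N IH F /ltnSE leFN.
have [le1F | lt1F] := leqP #|F| 1.
  have [-> | /shatters_set0 sh0] := eqVneq F set0; first by rewrite cards0.
  by apply: leq_trans le1F _; apply/card_gt0P; exists set0; rewrite inE.
have [A [B [AF BF neqAB]]] : exists A B, [/\ A \in F, B \in F & A != B].
  have /card_gt0P[A AF] := ltnW lt1F.
  have /card_gt0P[B] : 0 < #|F :\ A| by rewrite (cardsD1 A) AF in lt1F.
  by rewrite !inE => /andP[neqBA BF]; exists A, B; rewrite eq_sym.
have [x sepAB] := exists_separating_point neqAB.
pose X := [set C : {set T} | x \in C].
have [Fx_gt0 Fnx_gt0] : 0 < #|F :&: X| /\ 0 < #|F :\: X|.
  by split; apply/card_gt0P; case/orP: sepAB => /andP[xA xB];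
    [exists A | exists B | exists B | exists A]; rewrite !inE ?AF ?BF ?xA ?xB.
rewrite -(cardsID X F) in leFN *; apply: leq_trans (card_shattered_split F x).
apply: leq_add; apply: IH; apply: leq_trans leFN.
- by rewrite -addn1 leq_add2l.
- by rewrite -add1n leq_add2r.
Qed.

Lemma card_small_sets n :
  #|[set S : {set T} | #|S| <= n]| = \sum_(j < n.+1) 'C(#|T|, j).
Proof.
elim: n => [|n IH].
  by rewrite big_ord1 -card_draws; apply: eq_card => S; rewrite !inE leqn0.
have -> : [set S : {set T} | #|S| <= n.+1] =
          [set S : {set T} | #|S| <= n] :|: [set S : {set T} | #|S| == n.+1].
  by apply/setP => S; rewrite !inE leq_eqVlt ltnS orbC.
rewrite cardsU big_ord_recr /= -IH -card_draws.
have -> : [set S : {set T} | #|S| <= n] :&: [set S : {set T} | #|S| == n.+1] = set0.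
  by apply/setP => S; rewrite !inE; case: eqP => [->|]; rewrite ?andbF ?ltnn.
by rewrite cards0 subn0.
Qed.
End Shattering.

Section SignPatterns.
Variable R : realDomainType.
Local Open Scope ring_scope.

Lemma mul_sign_pattern_le0 (v y : R) : (0 < y) = (v < 0) -> v * y <= 0.
Proof.
move=> yv; have [v_lt0 | v_ge0] := ltrP v 0.
  by rewrite nmulr_rle0 // ltW // yv.
by rewrite mulr_ge0_le0 // leNgt yv -leNgt.
Qed.

Variable I : finType.
Implicit Types v y : I -> R.

Lemma sum_mul_sign_pattern_le0 v y :
  (forall i, (0 < y i) = (v i < 0)) -> \sum_i v i * y i <= 0.
Proof. by move=> yv; apply: sumr_le0 => i _; apply: mul_sign_pattern_le0. Qed.

Lemma sum_mul_sign_pattern_lt0 v y i0 :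
  (forall i, (0 < y i) = (v i < 0)) -> v i0 < 0 -> \sum_i v i * y i < 0.
Proof.
move=> yv vi0_lt0; rewrite (bigD1 i0) //= -[X in _ < X]addr0 ltr_leD //.
  by rewrite nmulr_rlt0 // yv.
by apply: sumr_le0 => i _; apply: mul_sign_pattern_le0.
Qed.

Lemma affine_relation_misses_sign_pattern (X : Type) (z : X -> I -> R) v c i0 :
  v i0 != 0 -> (forall x, \sum_i v i * z x i = c) ->
  ~ (forall p : pred I, exists x, forall i, (0 < z x i) = p i).
Proof.
move=> vi0_neq0 relz allp.
have relNz x : \sum_i - v i * z x i = - c.
  by rewrite -(relz x) -sumrN; apply: eq_bigr => i _; rewrite mulNr.
have [xN zN] := allp (fun i => v i < 0).
have [xP zP] := allp (fun i => - v i < 0).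
have c_le0 : c <= 0 by rewrite -(relz xN) sum_mul_sign_pattern_le0.
have c_ge0 : 0 <= c by rewrite -oppr_le0 -(relNz xP) sum_mul_sign_pattern_le0.
have [vi0_lt0 | vi0_gt0 | vi0_eq0] := ltgtP (v i0) 0.
- by have := sum_mul_sign_pattern_lt0 zN vi0_lt0; rewrite relz ltNge c_ge0.
- have Nvi0_lt0 : - v i0 < 0 by rewrite oppr_lt0.
  by have := sum_mul_sign_pattern_lt0 zP Nvi0_lt0; rewrite relNz oppr_lt0 ltNge c_le0.
- by move: vi0_neq0; rewrite vi0_eq0 eqxx.
Qed.
End SignPatterns.

Section ReluLayer.
Variables (R : realType) (n n' : nat) (W : 'M[R]_(n', n)) (b : 'cV[R]_n').
Implicit Type S : {set 'I_n'}.
Local Open Scope ring_scope.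

Definition active_sets : {set {set 'I_n'}} :=
  [set [set i | s i] | s : {ffun 'I_n' -> bool} in Sh W b].

Lemma card_active_sets : #|active_sets| = #|Sh W b|.
Proof.
by apply: card_imset => s s' /setP eq_ss'; apply/ffunP => i; move: (eq_ss' i); rewrite !inE.
Qed.

Lemma shatters_active_sets_sign_patterns S : shatters active_sets S ->
  forall p : pred 'I_#|S|,
    exists x : 'cV[R]_n, forall a, (0 < (W *m x + b) (enum_val a) 0) = p a.
Proof.
move=> /shattersP shS p.
have [|_ /imsetP[s sSh ->] /setP AS] := shS (enum_val @: [set a | p a]).
  by apply/subsetP => _ /imsetP[a _ ->]; apply: enum_valP.
move: sSh AS; rewrite inE => /asboolP[x ->] AS; exists x => a.
move: (AS (enum_val a)).
by rewrite !inE ffunE enum_valP andbT mem_imset ?inE //; apply: enum_val_inj.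
Qed.

Lemma not_shatters_large S : (n < #|S|)%N -> ~~ shatters active_sets S.
Proof.
move=> n_lt_S; apply/negP => /shatters_active_sets_sign_patterns allp.
pose M : 'M[R]_(#|S|, n) := \matrix_(a, j) W (enum_val a) j.
have : ~~ row_free M.
  by apply: contraL n_lt_S => /eqP <-; rewrite -leqNgt rank_leq_col.
rewrite -kermx_eq0 => /rowV0Pn[v /sub_kermxP vM /rV0Pn[a0 va0_neq0]].
pose bS : 'cV[R]_#|S| := \col_a b (enum_val a) 0.
apply: (affine_relation_misses_sign_pattern (c := (v *m bS) 0 0) va0_neq0 _ allp) => x.
have -> : v *m bS = v *m (M *m x + bS) by rewrite mulmxDr mulmxA vM mul0mx add0r.
rewrite mxE; apply: eq_bigr => a _; rewrite !mxE; congr (_ * (_ + _)).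
by apply: eq_bigr => j _; rewrite mxE.
Qed.

Lemma card_Sh_le : (#|Sh W b| <= \sum_(j < n.+1) 'C(n', j))%N.
Proof.
rewrite -card_active_sets; apply: leq_trans (card_le_shattered _) _.
rewrite -[n' in X in (_ <= X)%N]card_ord -card_small_sets.
apply: subset_leq_card; apply/subsetP => S; rewrite !inE leqNgt.
by apply: contraL; apply: not_shatters_large.
Qed.
End ReluLayer.

Implicit Types (v : V) (J K : nat).

Lemma tail_over_size v J : size v <= J -> tail v J = 0.
Proof. by move=> le_v_J; rewrite /tail big_geq. Qed.

Lemma leq_tail v J K : J <= K -> tail v K <= tail v J.
Proof.
move=> le_JK; rewrite /tail; have [le_K_v | lt_v_K] := leqP K (size v).
  by rewrite (big_cat_nat le_JK le_K_v) leq_addl.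
by rewrite big_geq ?(ltnW lt_v_K).
Qed.

Lemma tail_scal_e c i J : tail (scal_e c i) J = if J <= i then c else 0.
Proof.
have size_e : size (scal_e c i) = i.+1 by rewrite size_rcons size_nseq.
case: leqP => [le_J_i | lt_i_J]; last by rewrite tail_over_size ?size_e.
rewrite /tail size_e big_nat_recr //= /Defs.coord /scal_e nth_rcons size_nseq ltnn eqxx.
rewrite big_nat_cond big1 // => j /andP[/andP[_ lt_j_i] _].
by rewrite nth_rcons size_nseq lt_j_i nth_nseq lt_j_i.
Qed.

Lemma tail_Hvec0 n' (S : {set {ffun 'I_n' -> bool}}) : tail (Hvec S) 0 = #|S|.
Proof.
pose wt (s : {ffun 'I_n' -> bool}) := \sum_(i < n') s i.
have wt_le s : wt s <= n'.
  by rewrite -[n' in _ <= n']card_ord -sum1_card leq_sum // => i _; apply: leq_b1.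
rewrite /tail /Hvec size_mkseq big_mkord.
under eq_bigr => j _.
  rewrite /Defs.coord nth_mkseq // -sum1_card big_mkcond /=.
  under eq_bigr => s _ do rewrite inE -/(wt s).
  over.
rewrite exchange_big /= -sum1_card [RHS]big_mkcond; apply: eq_bigr => s _.
case: (s \in S) => /=; last by rewrite big1.
rewrite -big_mkcond (eq_bigl (fun j : 'I_n'.+1 => j == wt s :> nat)) => [|j]; last exact: eq_sym.
by rewrite (big_ord1_eq _ (fun=> 1)) ltnS wt_le.
Qed.

Lemma ex_max_nat (P : nat -> Prop) B :
  (exists t, P t) -> (forall t, P t -> t <= B) -> exists t, is_max_nat P t.
Proof.
move=> [t0 Pt0]; elim: B => [|B IH] le_P_B.
  by exists t0; split=> // u /le_P_B; rewrite leqn0 => /eqP->.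
have [PB | NPB] := pselect (P B.+1); first by exists B.+1.
apply: IH => t Pt; move: (le_P_B t Pt); rewrite leq_eqVlt => /predU1P[eq_tB | //].
by move: Pt; rewrite eq_tB.
Qed.

Lemma sumn_telescope_nonincr (T : nat -> nat) J N :
  (forall j, T j.+1 <= T j) -> J <= N -> \sum_(J <= j < N) (T j - T j.+1) + T N = T J.
Proof.
move=> T_dec; elim: N => [|N IH]; first by rewrite leqn0 => /eqP->; rewrite big_geq.
rewrite leq_eqVlt ltnS => /predU1P[-> | le_JN]; first by rewrite big_geq.
by rewrite big_nat_recr //= -addnA subnK // IH.
Qed.

Lemma maxV_exists (F : V -> Prop) N B :
  (exists v, F v) -> (forall v, F v -> size v <= N) -> (forall v, F v -> tail v 0 <= B) ->
  exists m, is_maxV F m /\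
    forall J, is_max_nat (fun t => exists v, F v /\ t = tail v J) (tail m J).
Proof.
move=> [v0 Fv0] sizeF boundF.
have /choice[T maxT] J : exists t, is_max_nat (fun t => exists v, F v /\ t = tail v J) t.
  apply: (@ex_max_nat _ B); first by exists (tail v0 J), v0.
  by move=> _ [v [Fv ->]]; apply: leq_trans (boundF v Fv); apply: leq_tail.
have T_dec J : T J.+1 <= T J.
  have [[v [Fv ->]] _] := maxT J.+1; apply: leq_trans (leq_tail v (leqnSn J)) _.
  by apply: (proj2 (maxT J)); exists v.
have T_over J : N <= J -> T J = 0.
  move=> le_NJ; have [[v [Fv ->]] _] := maxT J.
  by apply: tail_over_size; apply: leq_trans (sizeF v Fv) le_NJ.
pose m := mkseq (fun J => T J - T J.+1) N.
have coord_m J : Defs.coord m J = T J - T J.+1.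
  rewrite /Defs.coord; have [lt_J_N | le_N_J] := ltnP J N; first by rewrite nth_mkseq.
  by rewrite nth_default ?size_mkseq // !T_over // (leq_trans le_N_J).
have tail_m J : tail m J = T J.
  have [le_J_N | lt_N_J] := leqP J N; last by rewrite tail_over_size ?size_mkseq ?T_over // ltnW.
  rewrite /tail size_mkseq (eq_big_nat _ _ (fun j _ => coord_m j)).
  by rewrite -[RHS](sumn_telescope_nonincr T_dec le_J_N) T_over ?addn0.
by exists m; split=> [|J]; [exists T | rewrite tail_m].
Qed.

Lemma gamma_binom_mono n nt n' : n <= nt -> preceq (gamma_binom n n') (gamma_binom nt n').
Proof.
move=> le_n_nt J; rewrite /gamma_binom !tail_scal_e; case: ifP => // _.
by rewrite -!(big_mkord xpredT) (@big_cat_nat _ _ _ n.+1 0 nt.+1) ?leq_addr.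
Qed.

Section ReluFamily.
Variables (R : realType) (n n' : nat).

Lemma size_H_RL (W : 'M[R]_(n', n)) b : size (H_RL W b) <= n'.+1.
Proof.
by rewrite /H_RL; case: eqP => _; rewrite ?size_mkseq // size_rcons size_nseq.
Qed.

Lemma H_RL_preceq_gamma (W : 'M[R]_(n', n)) b : preceq (H_RL W b) (gamma_binom n n').
Proof.
move=> J; rewrite /gamma_binom tail_scal_e.
case: (leqP J n') => [_ | lt_n'_J]; last first.
  by rewrite tail_over_size // (leq_trans (size_H_RL W b)).
apply: leq_trans (leq_tail _ (leq0n J)) _.
rewrite /H_RL; case: eqP => [-> | _]; last by rewrite tail_Hvec0 card_Sh_le.
by rewrite /e_ tail_scal_e big_ord_recl bin0 leq_addr.
Qed.
End ReluFamily.

Theorem mainTheorem8 (R : realType) : bound_condition R gamma_binom.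
Proof.
split=> [n' n _ _ | n' n nt _ le_n_nt _]; last exact: gamma_binom_mono.
have RL_nonempty : exists v, RLfam R n n' v by exists (H_RL (0 : 'M[R]_(n', n))%R 0%R), 0%R, 0%R.
have [| |m [max_m tail_m]] :=
  maxV_exists (N := n'.+1) (B := tail (gamma_binom n n') 0) RL_nonempty.
- by move=> _ [W [b ->]]; apply: size_H_RL.
- by move=> _ [W [b ->]]; apply: H_RL_preceq_gamma.
exists m; split=> // J; have [[_ [[W [b ->]] ->]] _] := tail_m J.
exact: H_RL_preceq_gamma.
Qed.
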